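(* For every $\mu > 0$ there exists $n_0$ such that for every $n \geq n_0$ the following holds. Let $G$ be an $n$-vertex graph with minimum degree $\delta(G) \geq 7\mu n$ and independence number $\alpha(G) \leq 2$. Then either $G$ is $\mu$-inseparable, or there is a $\mu$-separation $\{U_1, U_2\}$ of $V(G)$ such that $G[U_1]$ and $G[U_2]$ are both $\mu$-inseparable.
   Context: For a graph $G$, a partition $\{U_1,U_2\}$ of $V(G)$ with $U_1, U_2$ nonempty is a $\mu$-separation if the number of edges of $G$ with one endpoint in $U_1$ and the other in $U_2$ is less than $\mu |U_1||U_2|$. A graph is $\mu$-inseparable if it has no $\mu$-separation. *)

From HB Require Import structures.
From mathcomp Require Import all_boot all_order all_algebra.
From mathcomp Require Import reals.
Set Implicit Arguments. Unset Strict Implicit. Unset Printing Implicit Defensive.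
Import Order.TTheory GRing.Theory Num.Theory.
Local Open Scope ring_scope.

(* A simple graph is a symmetric irreflexive relation e on a finite vertex type T. *)

(* number of edges of G with one endpoint in U1 and the other in U2
   (U1, U2 disjoint, so ordered pairs (x,y) with x in U1, y in U2 count each edge once) *)
Definition cross_edges (T : finType) (e : rel T) (U1 U2 : {set T}) : nat :=
  #|[set p : T * T | [&& p.1 \in U1, p.2 \in U2 & e p.1 p.2]]|.

(* {U1,U2} is a mu-separation of the vertex set W of the induced subgraph G[W]. *)
Definition mu_separation (R : realType) (T : finType) (e : rel T) (mu : R)
    (W U1 U2 : {set T}) : Prop :=
  [/\ U1 :|: U2 = W, U1 :&: U2 = set0, U1 != set0, U2 != set0 &
      (cross_edges e U1 U2)%:R < mu * (#|U1|)%:R * (#|U2|)%:R].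

Definition mu_inseparable (R : realType) (T : finType) (e : rel T) (mu : R)
    (W : {set T}) : Prop :=
  forall U1 U2 : {set T}, ~ mu_separation e mu W U1 U2.

Definition degree (T : finType) (e : rel T) (x : T) : nat := #|[set y | e x y]|.

Definition independent (T : finType) (e : rel T) (S : {set T}) : bool :=
  [forall x in S, forall y in S, ~~ e x y].

Definition indep_number_le (T : finType) (e : rel T) (k : nat) : Prop :=
  forall S : {set T}, independent e S -> (#|S| <= k)%N.

From HB Require Import structures.
From mathcomp Require Import all_boot all_order all_algebra.
From mathcomp Require Import reals lra.
From Stdlib Require Import Classical_Prop.
Set Implicit Arguments. Unset Strict Implicit. Unset Printing Implicit Defensive.
Import Order.TTheory GRing.Theory Num.Theory.
Local Open Scope ring_scope.

(* Take a mu-separation {U1, U2} with as few crossing edges as possible.  Since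
   every degree is at least 7 mu n, both sides of any mu-separation have more
   than 6 mu n vertices.  Suppose U2 had a mu-separation {C, D}.  As alpha(G) <= 2,
   every triple of U1 x C x D spans an edge, so
     |U1| |C| |D| <= e(U1,C) |D| + e(U1,D) |C| + e(C,D) |U1|,
   and e(C,D) < mu |C| |D| <= |C| |D| / 7 forces, say, e(U1,C) >= 3/7 |U1| |C|.
   Then {U1 ∪ C, D} is a mu-separation with fewer crossing edges. *)

Section CrossEdges.
Variables (T : finType) (e : rel T).

Lemma cross_edgesE (U V : {set T}) :
  cross_edges e U V = (\sum_(a in U) \sum_(b in V) e a b)%N.
Proof.
rewrite /cross_edges -sum1_card.
transitivity (\sum_a \sum_b ([&& a \in U, b \in V & e a b] : nat))%N.
  by rewrite pair_big big_mkcond /=; apply: eq_bigr => -[a b] _; rewrite inE.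
rewrite [RHS]big_mkcond; apply: eq_bigr => a _.
case: (a \in U); last by rewrite big1.
by rewrite [RHS]big_mkcond; apply: eq_bigr => b _; case: (b \in V).
Qed.

Lemma degreeE (v : T) : degree e v = (\sum_y e v y)%N.
Proof.
rewrite /degree -sum1_card big_mkcond /=.
by apply: eq_bigr => y _; rewrite inE; case: (e v y).
Qed.

Lemma cross_edgesUl (U V W : {set T}) : [disjoint U & V] ->
  cross_edges e (U :|: V) W = (cross_edges e U W + cross_edges e V W)%N.
Proof.
by move=> dUV; rewrite !cross_edgesE -bigU //; apply: eq_bigl => a; rewrite inE.
Qed.

Lemma cross_edgesUr (U V W : {set T}) : [disjoint V & W] ->
  cross_edges e U (V :|: W) = (cross_edges e U V + cross_edges e U W)%N.
Proof.
move=> dVW; rewrite !cross_edgesE -big_split; apply: eq_bigr => a _.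
by rewrite -bigU //; apply: eq_bigl => b; rewrite inE.
Qed.

Lemma sum_degree_le (U V : {set T}) : U :|: V = [set: T] -> [disjoint U & V] ->
  (\sum_(v in U) degree e v <= #|U| * #|U| + cross_edges e U V)%N.
Proof.
move=> UV_T dUV; rewrite cross_edgesE -sum_nat_const -big_split /=.
apply: leq_sum => v _; rewrite degreeE.
rewrite (eq_bigl (fun y => y \in [predU U & V])) => [|y]; last first.
  by rewrite inE /= -in_setU UV_T inE.
rewrite bigU // leq_add2r -sum1_card.
by apply: leq_sum => y _; apply: leq_b1.
Qed.

Hypothesis e_sym : symmetric e.

Lemma cross_edgesC (U V : {set T}) : cross_edges e U V = cross_edges e V U.
Proof.
rewrite !cross_edgesE exchange_big; apply: eq_bigr => a _.
by apply: eq_bigr => b _; rewrite e_sym.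
Qed.

Hypothesis e_irr : irreflexive e.
Hypothesis alpha2 : indep_number_le e 2.

Lemma alpha2_edge3 (a b c : T) : a != b -> a != c -> b != c ->
  [|| e a b, e a c | e b c].
Proof.
move=> ab ac bc; apply/negPn/negP => /norP[nab /norP[nac nbc]].
have /alpha2 : independent e [set a; b; c].
  apply/forall_inP => x Sx; apply/forall_inP => y Sy.
  move: Sx Sy; rewrite !inE => /orP[/orP[]|]/eqP-> /orP[/orP[]|]/eqP->;
    by rewrite ?e_irr // e_sym.
by rewrite setUC cardsU1 cards2 !inE ab ![c == _]eq_sym (negbTE ac) (negbTE bc).
Qed.

Lemma card_mul3_le_cross_edges (A B C : {set T}) :
  [disjoint A & B] -> [disjoint A & C] -> [disjoint B & C] ->
  (#|A| * #|B| * #|C| <= cross_edges e A B * #|C| + cross_edges e A C * #|B|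
                          + cross_edges e B C * #|A|)%N.
Proof.
move=> dAB dAC dBC.
have neq (X Y : {set T}) (x y : T) : [disjoint X & Y] -> x \in X -> y \in Y -> x != y.
  by move=> dXY Xx Yy; apply: contraTneq Yy => <-; rewrite (disjointFr dXY Xx).
have -> : (#|A| * #|B| * #|C| = \sum_(a in A) \sum_(b in B) \sum_(c in C) 1)%N.
  rewrite -mulnA -sum_nat_const; apply: eq_bigr => a _.
  by rewrite -sum_nat_const; apply: eq_bigr => b _; rewrite sum1_card.
have -> : (cross_edges e A B * #|C| = \sum_(a in A) \sum_(b in B) \sum_(c in C) e a b)%N.
  rewrite cross_edgesE big_distrl; apply: eq_bigr => a _; rewrite big_distrl.
  by apply: eq_bigr => b _; rewrite sum_nat_const mulnC.
have -> : (cross_edges e A C * #|B| = \sum_(a in A) \sum_(b in B) \sum_(c in C) e a c)%N.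
  by rewrite cross_edgesE big_distrl; apply: eq_bigr => a _; rewrite sum_nat_const mulnC.
have -> : (cross_edges e B C * #|A| = \sum_(a in A) \sum_(b in B) \sum_(c in C) e b c)%N.
  by rewrite sum_nat_const mulnC cross_edgesE.
rewrite -!big_split; apply: leq_sum => a Aa; rewrite -!big_split; apply: leq_sum => b Bb.
rewrite -!big_split; apply: leq_sum => c Cc.
move: (alpha2_edge3 (neq _ _ _ _ dAB Aa Bb) (neq _ _ _ _ dAC Aa Cc)
                   (neq _ _ _ _ dBC Bb Cc)).
by case: (e a b); case: (e a c); case: (e b c).
Qed.

End CrossEdges.

Section Separation.
Variables (R : realType) (mu : R) (T : finType) (e : rel T).

Lemma exists_min_mu_separation (W U1 U2 : {set T}) :
  mu_separation e mu W U1 U2 ->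
  exists V1 V2, mu_separation e mu W V1 V2 /\
    forall C D, mu_separation e mu W C D -> (cross_edges e V1 V2 <= cross_edges e C D)%N.
Proof.
move: {2}(cross_edges e U1 U2) (erefl (cross_edges e U1 U2)) => k.
elim/ltn_ind: k U1 U2 => k IH U1 U2 crossk sepU.
have [[C [D [sepCD lt_k]]] | min] :=
  classic (exists C D, mu_separation e mu W C D /\ (cross_edges e C D < k)%N).
  exact: IH lt_k C D erefl sepCD.
exists U1, U2; split => // C D sepCD; rewrite crossk leqNgt.
by apply/negP => lt_k; apply: min; exists C, D.
Qed.

Lemma mu_separation_disjoint (W U1 U2 : {set T}) :
  mu_separation e mu W U1 U2 -> [disjoint U1 & U2].
Proof. by case=> _ I12 _ _ _; rewrite -setI_eq0 I12. Qed.

Lemma mu_separation_subsetl (W U1 U2 : {set T}) :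
  mu_separation e mu W U1 U2 -> U1 \subset W.
Proof. by case=> <- _ _ _ _; apply: subsetUl. Qed.

Lemma mu_separation_subsetr (W U1 U2 : {set T}) :
  mu_separation e mu W U1 U2 -> U2 \subset W.
Proof. by case=> <- _ _ _ _; apply: subsetUr. Qed.

Hypothesis e_sym : symmetric e.

Lemma mu_separationC (W U1 U2 : {set T}) :
  mu_separation e mu W U1 U2 -> mu_separation e mu W U2 U1.
Proof.
case=> UW I12 U1n0 U2n0 cross12; split => //; rewrite 1?setUC 1?setIC //.
by rewrite cross_edgesC // mulrAC.
Qed.

Hypotheses (e_irr : irreflexive e) (alpha2 : indep_number_le e 2) (mu_gt0 : 0 < mu).
Hypothesis min_degree : forall x : T, 7%:R * mu * #|T|%:R <= (degree e x)%:R.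

Lemma seven_mu_le1 (v : T) : 7%:R * mu <= 1.
Proof.
have n_gt0 : 0 < #|T|%:R :> R by rewrite ltr0n; apply/card_gt0P; exists v.
have deg_le : (degree e v)%:R <= #|T|%:R :> R by rewrite ler_nat max_card.
by rewrite -(ler_pM2r n_gt0) mul1r (le_trans (min_degree v)).
Qed.

Lemma mu_separation_card_gt (U1 U2 : {set T}) :
  mu_separation e mu [set: T] U1 U2 -> 6%:R * mu * #|T|%:R < #|U1|%:R.
Proof.
case=> UT I12 U1n0 _ cross12.
have p_gt0 : 0 < #|U1|%:R :> R by rewrite ltr0n card_gt0.
have U2_le : #|U2|%:R <= #|T|%:R :> R by rewrite ler_nat max_card.
have deg_sum : #|U1|%:R * (7%:R * mu * #|T|%:R)
    <= #|U1|%:R * #|U1|%:R + (cross_edges e U1 U2)%:R :> R.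
  apply: le_trans (_ : (\sum_(v in U1) degree e v)%:R <= _).
    rewrite natr_sum -(sum1_card (mem U1)) natr_sum mulr_suml.
    by apply: ler_sum => v _; rewrite mul1r.
  by rewrite -natrM -natrD ler_nat sum_degree_le // -setI_eq0 I12.
have : mu * #|U1|%:R * #|U2|%:R <= mu * #|U1|%:R * #|T|%:R.
  by rewrite ler_wpM2l // mulr_ge0 // ltW.
by rewrite -(ltr_pM2l p_gt0); lra.
Qed.

Lemma merge_mu_separation (U1 U2 C D : {set T}) :
  mu_separation e mu [set: T] U1 U2 -> mu_separation e mu U2 C D ->
  (3%:R * #|U1|%:R * #|C|%:R <= 7%:R * (cross_edges e U1 C)%:R :> R) ->
  mu_separation e mu [set: T] (U1 :|: C) D /\
  (cross_edges e (U1 :|: C) D < cross_edges e U1 U2)%N.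
Proof.
move=> sep12 sepCD heavy.
have U1_large := mu_separation_card_gt sep12.
have dU1C := disjointWr (mu_separation_subsetl sepCD) (mu_separation_disjoint sep12).
have dU1D := disjointWr (mu_separation_subsetr sepCD) (mu_separation_disjoint sep12).
have dCD := mu_separation_disjoint sepCD.
case: sep12 sepCD => UT _ U1n0 _ cross12 [CD_U2 _ _ Dn0 crossCD].
have [v _] := set0Pn _ U1n0; have mu_le := seven_mu_le1 v.
have split12 : cross_edges e U1 U2 = (cross_edges e U1 C + cross_edges e U1 D)%N.
  by rewrite -CD_U2 cross_edgesUr.
rewrite split12 -CD_U2 cardsU (disjoint_setI0 dCD) cards0 subn0 !natrD in cross12.
have D_le : #|D|%:R <= #|T|%:R :> R by rewrite ler_nat max_card.
(* e(C, D) < mu |C| n < |U1| |C| / 6 <= e(U1, C) *)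
have lighter : (cross_edges e C D)%:R < (cross_edges e U1 C)%:R :> R.
  have : mu * #|C|%:R * #|D|%:R <= mu * #|C|%:R * #|T|%:R.
    by rewrite ler_wpM2l // mulr_ge0 // ltW.
  have : 6%:R * mu * #|T|%:R * #|C|%:R <= #|U1|%:R * #|C|%:R by rewrite ler_wpM2r // ltW.
  have : 0 <= (cross_edges e U1 C)%:R :> R by [].
  lra.
split; last by rewrite cross_edgesUl // split12 addnC ltn_add2r -(ltr_nat R).
split => //.
- by rewrite -setUA CD_U2.
- by rewrite setIUl (disjoint_setI0 dCD) (disjoint_setI0 dU1D) setU0.
- by rewrite setU_eq0 negb_and U1n0.
rewrite cross_edgesUl // cardsU (disjoint_setI0 dU1C) cards0 subn0 !natrD.
have pc_ge0 : 0 <= #|U1|%:R * #|C|%:R :> R by rewrite mulr_ge0.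
have := ler_wpM2r pc_ge0 mu_le.
lra.
Qed.

Lemma refine_mu_separation (U1 U2 C D : {set T}) :
  mu_separation e mu [set: T] U1 U2 -> mu_separation e mu U2 C D ->
  exists V1 V2, mu_separation e mu [set: T] V1 V2 /\
    (cross_edges e V1 V2 < cross_edges e U1 U2)%N.
Proof.
move=> sep12 sepCD.
have [heavyC | lightC] :=
  lerP (3%:R * #|U1|%:R * #|C|%:R) (7%:R * (cross_edges e U1 C)%:R : R).
  by exists (U1 :|: C), D; apply: merge_mu_separation.
have [heavyD | lightD] :=
  lerP (3%:R * #|U1|%:R * #|D|%:R) (7%:R * (cross_edges e U1 D)%:R : R).
  by exists (U1 :|: D), C; apply: merge_mu_separation (mu_separationC sepCD) _.
have dU1C := disjointWr (mu_separation_subsetl sepCD) (mu_separation_disjoint sep12).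
have dU1D := disjointWr (mu_separation_subsetr sepCD) (mu_separation_disjoint sep12).
have dCD := mu_separation_disjoint sepCD.
case: sep12 sepCD => _ _ U1n0 _ _ [_ _ Cn0 Dn0 crossCD].
have [v _] := set0Pn _ U1n0; have mu_le := seven_mu_le1 v.
have := card_mul3_le_cross_edges e_sym e_irr alpha2 dU1C dU1D dCD.
rewrite -(ler_nat R) !natrD !natrM.
have p_gt0 : 0 < #|U1|%:R :> R by rewrite ltr0n card_gt0.
have c_gt0 : 0 < #|C|%:R :> R by rewrite ltr0n card_gt0.
have d_gt0 : 0 < #|D|%:R :> R by rewrite ltr0n card_gt0.
rewrite -(ltr_pM2r d_gt0) in lightC; rewrite -(ltr_pM2r c_gt0) in lightD.
rewrite -(ltr_pM2r p_gt0) in crossCD.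
have := ler_wpM2r (ltW (mulr_gt0 (mulr_gt0 c_gt0 d_gt0) p_gt0)) mu_le.
lra.
Qed.

Lemma min_mu_separation_inseparable (U1 U2 : {set T}) :
  mu_separation e mu [set: T] U1 U2 ->
  (forall C D, mu_separation e mu [set: T] C D ->
     (cross_edges e U1 U2 <= cross_edges e C D)%N) ->
  mu_inseparable e mu U1 /\ mu_inseparable e mu U2.
Proof.
suff insep2 V1 V2 : mu_separation e mu [set: T] V1 V2 ->
    (forall C D, mu_separation e mu [set: T] C D ->
       (cross_edges e V1 V2 <= cross_edges e C D)%N) ->
    mu_inseparable e mu V2.
  move=> sep12 min12; split; last exact: insep2 sep12 min12.
  apply: insep2 (mu_separationC sep12) _ => C D sepCD.
  by rewrite cross_edgesC // min12.
move=> sep12 min12 C D sepCD.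
have [W1 [W2 [sepW ltW]]] := refine_mu_separation sep12 sepCD.
by move: (min12 _ _ sepW); rewrite leqNgt ltW.
Qed.

End Separation.

Theorem lemma7p3 (R : realType) (mu : R) (hmu : 0 < mu) :
  exists n0 : nat, forall n : nat, (n0 <= n)%N ->
  forall (T : finType) (e : rel T),
    symmetric e -> irreflexive e -> #|T| = n ->
    (forall x : T, 7%:R * mu * n%:R <= (degree e x)%:R) ->
    indep_number_le e 2 ->
    mu_inseparable e mu [set: T] \/
    exists U1 U2 : {set T},
      [/\ mu_separation e mu [set: T] U1 U2,
          mu_inseparable e mu U1 & mu_inseparable e mu U2].
Proof.
exists 0%N => _ _ T e e_sym e_irr <- min_degree alpha2.
have [insep | sep] := classic (mu_inseparable e mu [set: T]); [left | right] => //.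
have [U1 [U2 sep12]] : exists U1 U2, mu_separation e mu [set: T] U1 U2.
  by apply: NNPP => none; apply: sep => U1 U2 sep12; apply: none; exists U1, U2.
have [V1 [V2 [sepV minV]]] := exists_min_mu_separation sep12.
have [insep1 insep2] :=
  min_mu_separation_inseparable e_sym e_irr alpha2 hmu min_degree sepV minV.
by exists V1, V2.
Qed.
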